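(* Let $\Omega\subseteq\mathbb{R}^n$ and $\varphi\in\Phi_{\mathrm w}(\Omega)$. The following are equivalent: (1) $\varphi$ satisfies condition (A2). (2) For every $\sigma>0$ there exist $\beta\in(0,1]$ and $h\in L^1(\Omega)\cap L^\infty(\Omega)$, $h\ge0$, such that for a.e. $x,y\in\Omega$: $\varphi(x,\beta t)\le\varphi(y,t)+h(x)+h(y)$ whenever $\varphi(y,t)\in[0,\sigma]$. (3) For every $\sigma>0$ there exist $\beta\in(0,1]$ and $h\in L^1(\Omega)\cap L^\infty(\Omega)$, $h\ge0$, such that for a.e. $x,y\in\Omega$: $\beta\varphi^{-1}(x,\max\{\tau,h(x)+h(y)\})\le\varphi^{-1}(y,\max\{\tau,h(x)+h(y)\})$ for all $\tau\in[0,\sigma]$. (4) For every $\sigma>0$ there exist $\beta\in(0,1]$ and $h\in L^1(\Omega)\cap L^\infty(\Omega)$, $h\ge0$, with $\|h\|_\infty\le\sigma/2$, such that for a.e. $x,y\in\Omega$: $\beta\varphi^{-1}(x,\tau)\le\varphi^{-1}(y,\tau)$ for all $\tau\in[h(x)+h(y),\sigma]$. (5) $\varphi$ satisfies condition (A0), and for every $\sigma>0$ there exist $\beta\in(0,1]$ and $h\in L^1(\Omega)\cap L^\infty(\Omega)$, $h\ge0$, such that for a.e. $x,y\in\Omega$: $\beta\varphi^{-1}(x,\tau)\le\varphi^{-1}(y,\tau)$ for all $\tau\in[h(x)+h(y),\sigma]$.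
   Context: A function $f:[0,\infty)\to[0,\infty]$ is $a$-almost increasing ($a\ge1$) if $f(s)\le a f(t)$ for all $s\le t$. A function $\varphi:\Omega\times[0,\infty)\to[0,\infty]$ is a weak $\Phi$-function, $\varphi\in\Phi_{\mathrm w}(\Omega)$, if for a.e. $x\in\Omega$: $x\mapsto\varphi(x,|f(x)|)$ is measurable for every measurable $f:\Omega\to\mathbb{R}$; $t\mapsto\varphi(x,t)$ is increasing (non-decreasing); $\varphi(x,0)=\lim_{t\to0^+}\varphi(x,t)=0$ and $\lim_{t\to\infty}\varphi(x,t)=\infty$; and $t\mapsto\varphi(x,t)/t$ is $a$-almost increasing on $(0,\infty)$ with $a\ge1$ independent of $x$. The left-inverse is $\varphi^{-1}(x,\tau):=\inf\{t\ge0:\varphi(x,t)\ge\tau\}$. Condition (A0): there exists $\beta\in(0,1]$ with $\beta\le\varphi^{-1}(x,1)\le1/\beta$ for a.e. $x\in\Omega$. Condition (A2): for every $\sigma>0$ there exist $\beta\in(0,1]$ and $h\in L^1(\Omega)\cap L^\infty(\Omega)$, $h\ge0$, such that for a.e. $x,y\in\Omega$, $\beta\varphi^{-1}(x,\tau)\le\varphi^{-1}(y,\tau+h(x)+h(y))$ for all $\tau\in[0,\sigma]$. *)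

From HB Require Import structures.
From mathcomp Require Import all_boot all_order all_algebra.
From mathcomp Require Import all_classical all_reals all_analysis measurable_realfun.
Set Implicit Arguments. Unset Strict Implicit. Unset Printing Implicit Defensive.
Import Order.TTheory GRing.Theory Num.Theory.
Import numFieldNormedType.Exports.
Local Open Scope classical_set_scope.
Local Open Scope ring_scope.

Section GenPhi.
Context {d : measure_display} {T : measurableType d} {R : realType}.
Variables (mu : {measure set T -> \bar R}) (Omega : set T).

Definition ae2 (P : T -> T -> Prop) : Prop :=
  exists N : set T, mu.-negligible N /\
    forall x y, Omega x -> Omega y -> ~ N x -> ~ N y -> P x y.

(* phi : Omega x [0,oo) -> [0,oo] is a weak Phi-function (values at t < 0
   are irrelevant and unconstrained). *)
Definition weak_Phi (phi : T -> R -> \bar R) : Prop :=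
  [/\ (forall x t, Omega x -> 0 <= t -> (0 <= phi x t)%E),
      (forall f : T -> R, measurable_fun Omega f ->
          measurable_fun Omega ((fun x => phi x `|f x|) : T -> \bar R)) &
      exists a : R, 1 <= a /\
        {ae mu, forall x, Omega x ->
          [/\ (forall s t, 0 <= s -> s <= t -> (phi x s <= phi x t)%E),
              phi x 0 = 0%E,
              phi x t @[t --> 0^'+] --> 0%E,
              phi x t @[t --> +oo] --> +oo%E &
              (forall s t, 0 < s -> s <= t ->
                 (phi x s * (s^-1)%:E <= a%:E * (phi x t * (t^-1)%:E))%E)]}].

Definition phi_inv (phi : T -> R -> \bar R) (x : T) (tau : R) : R :=
  inf [set t : R | 0 <= t /\ (tau%:E <= phi x t)%E].

Definition L1Linf_nonneg (h : T -> R) : Prop :=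
  [/\ measurable_fun Omega h,
      (forall x, Omega x -> 0 <= h x),
      mu.-integrable Omega (EFin \o h) &
      exists M : R, {ae mu, forall x, Omega x -> h x <= M}].

Definition cond_A0 (phi : T -> R -> \bar R) : Prop :=
  exists beta : R, [/\ 0 < beta, beta <= 1 &
    {ae mu, forall x, Omega x ->
       beta <= phi_inv phi x 1 /\ phi_inv phi x 1 <= beta^-1}].

Definition cond_A2 (phi : T -> R -> \bar R) : Prop :=
  forall sigma : R, 0 < sigma ->
    exists beta : R, exists h : T -> R,
      [/\ 0 < beta, beta <= 1, L1Linf_nonneg h &
        ae2 (fun x y => forall tau, 0 <= tau -> tau <= sigma ->
          beta * phi_inv phi x tau <= phi_inv phi y (tau + h x + h y))].

End GenPhi.

(* Pointwise, two properties of the left inverse do most of the work: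
   t < phi^-1(x, tau) forces phi(x, t) < tau, and phi^-1(x, tau) < t forces
   tau <= phi(x, t).  They turn the inverse inequality of (A2) into the
   inequality (2) for phi, with beta halved, and (2) back into an inverse
   inequality.  Almost increase of phi(x, t)/t gives
   phi^-1(x, lam tau) <= a lam phi^-1(x, tau) for lam >= 1, which trades the
   shift h(x) + h(y) for a multiplicative constant as soon as tau is comparable
   to h(x) + h(y); this is why h is first shrunk to h <= sigma/2.  Taking
   sigma = 2 in (4) and comparing with one fixed good point x0 yields (A0);
   conversely (A0) bounds phi^-1 above and below for levels between
   min(sigma, 1) and max(sigma, 1), which covers the pairs with
   h(x) + h(y) > sigma in (5) => (1).  All exceptional pairs are collected in
   a single null set. *)

From HB Require Import structures.
From mathcomp Require Import all_boot all_order all_algebra.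
From mathcomp Require Import all_classical all_reals all_analysis measurable_realfun.
From mathcomp Require Import ring lra.

Set Implicit Arguments. Unset Strict Implicit. Unset Printing Implicit Defensive.
Import Order.TTheory GRing.Theory Num.Theory.
Import numFieldNormedType.Exports.
Local Open Scope classical_set_scope.
Local Open Scope ring_scope.

Section phi_inv_at.
Context {d : measure_display} {T : measurableType d} {R : realType}.
Variables (phi : T -> R -> \bar R) (a : R).

Definition wPhi_at (x : T) : Prop :=
  [/\ (forall s t, 0 <= s -> s <= t -> (phi x s <= phi x t)%E),
      phi x 0 = 0%E,
      phi x t @[t --> 0^'+] --> 0%E,
      phi x t @[t --> +oo] --> +oo%E &
      (forall s t, 0 < s -> s <= t ->
         (phi x s * (s^-1)%:E <= a%:E * (phi x t * (t^-1)%:E))%E)].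

Variable x : T.
Local Notation psi := (phi_inv phi x).

Lemma phi_inv_ge0 tau : 0 <= psi tau.
Proof.
rewrite /phi_inv.
have [ne|empty] := pselect ([set t : R | 0 <= t /\ (tau%:E <= phi x t)%E] !=set0).
  by apply: lb_le_inf => // t [].
by rewrite inf_out // => -[].
Qed.

Lemma phi_inv_le tau t : 0 <= t -> (tau%:E <= phi x t)%E -> psi tau <= t.
Proof. by move=> t0 ht; apply: ge_inf => //; exists 0 => s []. Qed.

Lemma phi_lt_of_lt_phi_inv tau t : 0 <= t -> t < psi tau -> (phi x t < tau%:E)%E.
Proof. by move=> t0; apply: contraTT; rewrite -!leNgt; apply: phi_inv_le. Qed.

Hypothesis wx : wPhi_at x.

Lemma phi_ge0 t : 0 <= t -> (0 <= phi x t)%E.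
Proof. by case: wx => mono phi0 _ _ _ t0; rewrite -phi0; apply: mono. Qed.

Lemma phi_inv_set_neq0 tau : [set t : R | 0 <= t /\ (tau%:E <= phi x t)%E] !=set0.
Proof.
case: wx => _ _ _ /cvgeyPge/(_ tau) [M [_ phiM]] _.
exists (Num.max 0 M + 1); split; first by rewrite addr_ge0 // le_max lexx.
by apply: phiM; rewrite (@le_lt_trans _ _ (Num.max 0 M)) ?ltrDl // le_max lexx orbT.
Qed.

Lemma phi_ge_of_phi_inv_lt tau t : psi tau < t -> (tau%:E <= phi x t)%E.
Proof.
case: wx => mono _ _ _ _ /(inf_lt (phi_inv_set_neq0 tau)) [s [s0 taus] st].
by apply: le_trans taus _; apply: mono => //; apply: ltW.
Qed.

Lemma le_phi_inv s t : s <= t -> psi s <= psi t.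
Proof.
move=> st; apply: lb_le_inf; first exact: phi_inv_set_neq0.
by move=> u [u0 tu]; apply: phi_inv_le => //; apply: le_trans tu; rewrite lee_fin.
Qed.

Lemma phi_inv_gt0 tau : 0 < tau -> 0 < psi tau.
Proof.
move=> tau0; rewrite lt_neqAle phi_inv_ge0 andbT; apply/eqP => psi0.
have [_ _ phi_at0 _ _] := wx.
suff : (tau%:E <= 0)%E by rewrite lee_fin leNgt tau0.
apply: (cvge_to_ge phi_at0); near=> t; apply: phi_ge_of_phi_inv_lt; rewrite -psi0.
by near: t; exact: nbhs_right_gt.
Unshelve. all: end_near.
Qed.

Hypothesis a_ge1 : 1 <= a.

Lemma phi_scale_ge lam w : 1 <= lam -> 0 < w ->
  (lam%:E * phi x w <= phi x (a * lam * w))%E.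
Proof.
move=> lam1 w0; have [_ _ _ _ incr] := wx.
have a0 : 0 < a by apply: lt_le_trans a_ge1.
have lam0 : 0 < lam by apply: lt_le_trans lam1.
have w_le : w <= a * lam * w by rewrite ler_peMl ?(ltW w0) // -[1]mulr1 ler_pM.
have lw0 : (0 <= (lam * w)%:E)%E by rewrite lee_fin mulr_ge0 ?ltW.
have := lee_wpmul2r lw0 (incr _ _ w0 w_le).
rewrite -muleA -EFinM mulrCA mulVf ?gt_eqF // mulr1 muleC.
move=> /le_trans; apply.
rewrite muleCA -EFinM -muleA -EFinM.
have -> : a * (a * lam * w)^-1 * (lam * w) = 1 by field; rewrite !gt_eqF.
by rewrite mule1.
Qed.

Lemma phi_inv_scale lam tau : 1 <= lam -> psi (lam * tau) <= a * lam * psi tau.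
Proof.
move=> lam1; have al0 : 0 < a * lam by rewrite mulr_gt0 // (lt_le_trans ltr01).
apply/ler_addgt0Pr => e e0.
set w := psi tau + e / (a * lam).
have psi_lt : psi tau < w by rewrite ltrDl divr_gt0.
have w0 : 0 < w by apply: le_lt_trans psi_lt; apply: phi_inv_ge0.
have -> : a * lam * psi tau + e = a * lam * w by rewrite /w mulrDr mulrCA divff ?gt_eqF ?mulr1.
apply: phi_inv_le; first by rewrite mulr_ge0 ?ltW.
apply: le_trans (phi_scale_ge lam1 w0); rewrite EFinM lee_wpmul2l //.
  by rewrite lee_fin (le_trans ler01).
exact: phi_ge_of_phi_inv_lt.
Qed.

Lemma phi_inv_le_max1 (b0 sigma tau : R) : psi 1 <= b0^-1 -> tau <= sigma ->
  psi tau <= a * Num.max sigma 1 / b0.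
Proof.
move=> psi1 tau_le; set M := Num.max sigma 1.
have [s_le_M M1] : sigma <= M /\ 1 <= M by rewrite !le_max !lexx orbT.
apply: le_trans (le_phi_inv (_ : tau <= M * 1)) _; first by rewrite mulr1 (le_trans tau_le).
apply: le_trans (phi_inv_scale 1 M1) _.
by rewrite ler_pM2l // mulr_gt0 // (lt_le_trans ltr01).
Qed.

Lemma phi_inv_ge_min1 (b0 sigma tau : R) : 0 < sigma -> b0 <= psi 1 -> sigma <= tau ->
  b0 * Num.min sigma 1 / a <= psi tau.
Proof.
move=> s0 psi1 s_le_tau; set m := Num.min sigma 1.
have m0 : 0 < m by rewrite lt_min s0 ltr01.
have [m_le_s m1] : m <= sigma /\ m <= 1 by rewrite !ge_min !lexx orbT.
have m_inv1 : 1 <= m^-1 by rewrite invf_ge1.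
have := phi_inv_scale m m_inv1; rewrite mulVf ?gt_eqF // => psi1_le.
rewrite ler_pdivrMr ?(lt_le_trans ltr01) //.
apply: le_trans (ler_wpM2r (ltW m0) (le_trans psi1 psi1_le)) _.
have -> : a * m^-1 * psi m * m = psi m * a by field; rewrite gt_eqF.
by rewrite ler_wpM2r ?le_phi_inv ?(le_trans m_le_s) // (le_trans ler01).
Qed.

End phi_inv_at.

Section phi_inv_pair.
Context {d : measure_display} {T : measurableType d} {R : realType}.
Variables (phi : T -> R -> \bar R) (a : R) (x y : T).
Hypotheses (wx : wPhi_at phi a x) (wy : wPhi_at phi a y).
Local Notation psi := (phi_inv phi).

(* [phi x] may jump at [psi x tau], so only points strictly below it are
   guaranteed to have [phi x] below [tau]; hence the factor 1/2. *)
Lemma phi_le_of_phi_inv_le beta H S : 0 < beta -> 0 <= H -> 0 < S ->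
  (forall tau, 0 <= tau -> tau <= 2 * S -> beta * psi y tau <= psi x (tau + H)) ->
  forall t, 0 <= t -> (phi y t <= S%:E)%E ->
  (phi x (beta / 2 * t) <= phi y t + H%:E)%E.
Proof.
move=> b0 H0 S0 inv_le t t0 phiS; have [t_le0|t_gt0] := lerP t 0.
  have -> : t = 0 by apply/eqP; rewrite eq_le t_le0 t0.
  by rewrite mulr0; have [_ -> _ _ _] := wx; rewrite adde_ge0 ?lee_fin ?(phi_ge0 wy).
have := phi_ge0 wy t0; move: phiS.
case phiy: (phi y t) => [v| |]; [|by rewrite leye_eq|by move=> _; rewrite leeNy_eq].
rewrite !lee_fin => vS v0; apply/lee_addgt0Pr => e e0.
set tau := v + Num.min e S.
have mS : 0 < Num.min e S by rewrite lt_min e0.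
have t_le : t <= psi y tau.
  rewrite leNgt; apply/negP => /(phi_ge_of_phi_inv_lt wy).
  by rewrite phiy lee_fin /tau gerDl leNgt mS.
have mS_le : Num.min e S <= e /\ Num.min e S <= S by rewrite !ge_min !lexx orbT.
have psi_gt : beta / 2 * t < psi x (tau + H).
  apply: lt_le_trans (inv_le tau _ _); last 2 first.
  - by rewrite addr_ge0 // ltW.
  - by rewrite /tau; lra.
  apply: (@lt_le_trans _ _ (beta * t)); last by rewrite ler_pM2l.
  by rewrite ltr_pM2r //; lra.
have : (phi x (beta / 2 * t) < (tau + H)%:E)%E.
  by apply: phi_lt_of_lt_phi_inv; rewrite // mulr_ge0 ?divr_ge0 ?ltW.
by move/ltW/le_trans; apply; rewrite -!EFinD lee_fin /tau; lra.
Qed.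

Lemma phi_inv_le_of_phi_le beta H S M : 0 < beta ->
  (forall t, 0 <= t -> (phi x t <= S%:E)%E -> (phi y (beta * t) <= phi x t + H%:E)%E) ->
  M <= S -> beta * psi x M <= psi y (M + H).
Proof.
move=> b0 phi_le MS; rewrite leNgt; apply/negP => lt_psi.
set q := psi y (M + H) / beta.
have q0 : 0 <= q by rewrite divr_ge0 ?phi_inv_ge0 ?ltW.
have q_lt : q < psi x M by rewrite ltr_pdivrMr // mulrC.
set t := (q + psi x M) / 2.
have t0 : 0 <= t by rewrite /t; lra.
have phit_lt : (phi x t < M%:E)%E by apply: phi_lt_of_lt_phi_inv => //; rewrite /t; lra.
have psiy_lt : psi y (M + H) < beta * t by rewrite mulrC -ltr_pdivrMr // -/q /t; lra.
have phiy_le := phi_le t t0 (le_trans (ltW phit_lt) _).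
have := le_trans (phi_ge_of_phi_inv_lt wy psiy_lt) (phiy_le _); rewrite lee_fin => /(_ MS).
by rewrite EFinD leNgt lteD2rE ?phit_lt.
Qed.

End phi_inv_pair.

Section ae_pairs.
Context {d : measure_display} {T : measurableType d} {R : realType}.
Variables (mu : {measure set T -> \bar R}) (Omega : set T).

Lemma ae2S (Q : T -> Prop) (P P' : T -> T -> Prop) :
  {ae mu, forall x, Omega x -> Q x} -> ae2 mu Omega P ->
  (forall x y, Omega x -> Omega y -> Q x -> Q y -> P x y -> P y x -> P' x y) ->
  ae2 mu Omega P'.
Proof.
move=> aeQ [N [nN PN]] PP'; exists (N `|` ~` [set x | Omega x -> Q x]).
split=> [|x y Ox Oy /not_orP[Nx /contrapT Qx] /not_orP[Ny /contrapT Qy]].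
  exact: negligibleU.
by apply: PP'; [| | apply: Qx | apply: Qy | apply: PN | apply: PN].
Qed.

Lemma ae2_anchor (Q : T -> Prop) (P : T -> T -> Prop) :
  {ae mu, forall x, Omega x -> Q x} -> ae2 mu Omega P ->
  {ae mu, forall x, ~ Omega x} \/
  exists2 x0, Omega x0 /\ Q x0 &
    {ae mu, forall y, Omega y -> [/\ Q y, P x0 y & P y x0]}.
Proof.
move=> aeQ [N [nN PN]].
have nN' : mu.-negligible (N `|` ~` [set x | Omega x -> Q x]) by exact: negligibleU.
have [[x0 [Ox0 good]]|noGood] :=
  pselect (exists x0, Omega x0 /\ ~ (N x0 \/ ~ (Omega x0 -> Q x0))).
  move/not_orP: good => [Nx0 /contrapT Qx0].
  right; exists x0; first by split=> //; apply: Qx0.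
  apply: negligibleS nN' => y /= notP; apply: contrapT => /not_orP[Ny /contrapT Qy].
  by apply: notP => Oy; split; [apply: Qy | apply: PN | apply: PN].
left; apply: negligibleS nN' => x /= /contrapT Ox.
by apply: contrapT => Nx; apply: noGood; exists x.
Qed.

Lemma ae_in_and (P Q : T -> Prop) :
  {ae mu, forall x, Omega x -> P x} -> {ae mu, forall x, Omega x -> Q x} ->
  {ae mu, forall x, Omega x -> P x /\ Q x}.
Proof. by apply: filterS2 => x Px Qx Ox; split; [apply: Px | apply: Qx]. Qed.

Hypothesis mOmega : measurable Omega.

Lemma L1Linf_nonneg_scale (h : T -> R) (c : R) : 0 <= c ->
  L1Linf_nonneg mu Omega h -> L1Linf_nonneg mu Omega (fun x => c * h x).
Proof.
move=> c0 [mh h0 ih [K hK]]; split.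
- by apply: measurable_funM => //; exact: measurable_cst.
- by move=> x Ox; rewrite mulr_ge0 ?h0.
- exact: (integrableZl mOmega c ih).
- by exists (c * K); apply: filterS hK => x hK' Ox; rewrite ler_wpM2l ?hK'.
Qed.

Lemma L1Linf_nonneg_shrink (h : T -> R) (s : R) : 0 < s -> L1Linf_nonneg mu Omega h ->
  exists c, [/\ 0 < c, c <= 1, L1Linf_nonneg mu Omega (fun x => c * h x) &
    {ae mu, forall x, Omega x -> c * h x <= s}].
Proof.
move=> s0 hL; have [_ _ _ [K hK]] := hL.
have Ks0 : 0 < Num.max K s by rewrite lt_max s0 orbT.
exists (s / Num.max K s); split.
- exact: divr_gt0.
- by rewrite ler_pdivrMr // mul1r le_max lexx orbT.
- by apply: L1Linf_nonneg_scale hL; rewrite divr_ge0 ?ltW.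
apply: filterS hK => x hK' Ox; rewrite mulrC -ler_pdivlMr ?divr_gt0 //.
by rewrite invf_div mulrC mulfVK ?gt_eqF // (le_trans (hK' Ox)) // le_max lexx.
Qed.

End ae_pairs.

Section conditions.
Context {d : measure_display} {T : measurableType d} {R : realType}.
Variables (mu : {measure set T -> \bar R}) (Omega : set T) (phi : T -> R -> \bar R).

Definition cond_A2_phi : Prop :=
  forall sigma : R, 0 < sigma ->
    exists beta : R, exists h : T -> R,
      [/\ 0 < beta, beta <= 1, L1Linf_nonneg mu Omega h &
        ae2 mu Omega (fun x y => forall t : R, 0 <= t ->
          (0 <= phi y t)%E -> (phi y t <= sigma%:E)%E ->
          (phi x (beta * t)%R <= phi y t + (h x + h y)%:E)%E)].

Definition cond_A2_max : Prop :=
  forall sigma : R, 0 < sigma ->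
    exists beta : R, exists h : T -> R,
      [/\ 0 < beta, beta <= 1, L1Linf_nonneg mu Omega h &
        ae2 mu Omega (fun x y => forall tau : R, 0 <= tau -> tau <= sigma ->
          beta * phi_inv phi x (Num.max tau (h x + h y))
            <= phi_inv phi y (Num.max tau (h x + h y)))].

Definition cond_A2_small : Prop :=
  forall sigma : R, 0 < sigma ->
    exists beta : R, exists h : T -> R,
      [/\ 0 < beta, beta <= 1, L1Linf_nonneg mu Omega h,
        {ae mu, forall x, Omega x -> h x <= sigma / 2} &
        ae2 mu Omega (fun x y => forall tau : R, h x + h y <= tau -> tau <= sigma ->
          beta * phi_inv phi x tau <= phi_inv phi y tau)].

Definition cond_A2_above : Prop :=
  forall sigma : R, 0 < sigma ->
    exists beta : R, exists h : T -> R,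
      [/\ 0 < beta, beta <= 1, L1Linf_nonneg mu Omega h &
        ae2 mu Omega (fun x y => forall tau : R, h x + h y <= tau -> tau <= sigma ->
          beta * phi_inv phi x tau <= phi_inv phi y tau)].

End conditions.

Section equivalence.
Context {d : measure_display} {T : measurableType d} {R : realType}.
Variables (mu : {measure set T -> \bar R}) (Omega : set T).
Hypothesis mOmega : measurable Omega.
Variables (phi : T -> R -> \bar R) (a : R).
Hypothesis a_ge1 : 1 <= a.
Hypothesis phi_ae : {ae mu, forall x, Omega x -> wPhi_at phi a x}.
Local Notation psi := (phi_inv phi).

Lemma cond_A2_phi_of_A2 : cond_A2 mu Omega phi -> cond_A2_phi mu Omega phi.
Proof.
move=> A2 sigma s0; have s2 : 0 < 2 * sigma by rewrite mulr_gt0.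
have [beta [h [b0 b1 hL inv_le]]] := A2 _ s2.
have [_ h0 _ _] := hL.
exists (beta / 2), h; split => //; [by rewrite divr_gt0 | by lra |].
apply: ae2S phi_ae inv_le _ => x y Ox Oy wx wy _ inv_le_yx t t0 _ phiS.
rewrite [h x + h y]addrC; apply: (phi_le_of_phi_inv_le wx wy b0 _ s0) => //.
  by rewrite addr_ge0 ?h0.
by move=> tau tau0 tau_le; rewrite addrA; apply: inv_le_yx.
Qed.

Lemma cond_A2_max_of_A2_phi : cond_A2_phi mu Omega phi -> cond_A2_max mu Omega phi.
Proof.
move=> A2phi sigma s0; have [beta [h [b0 b1 hL phi_le]]] := A2phi sigma s0.
have [c [c0 _ chL ch_le]] := L1Linf_nonneg_shrink mOmega (divr_gt0 s0 (ltr0Sn _ 1)) hL.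
have one_le : 1 <= 1 + c^-1 by rewrite lerDl invr_ge0 ltW.
set D := a * (1 + c^-1); have D1 : 1 <= D by rewrite -[1]mulr1 ler_pM.
exists (beta / D), (fun x => c * h x); split => //.
- by rewrite divr_gt0 // (lt_le_trans ltr01).
- by rewrite ler_pdivrMr ?mul1r ?(le_trans b1) // (lt_le_trans ltr01).
apply: ae2S (ae_in_and phi_ae ch_le) phi_le _.
move=> x y Ox Oy [wx chx] [wy chy] _ phi_le_yx tau tau0 tau_le.
set M := Num.max tau (c * h x + c * h y).
have M_le : M <= sigma by rewrite ge_max tau_le /=; lra.
have H_le : h y + h x <= c^-1 * M.
  by rewrite -(ler_pM2l c0) mulrA mulfV ?gt_eqF // mul1r mulrDr addrC le_max lexx orbT.
rewrite mulrAC ler_pdivrMr ?(lt_le_trans ltr01) //.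
apply: le_trans (phi_inv_le_of_phi_le wy b0 _ M_le) _.
  by move=> t t0; apply: phi_le_yx t0 (phi_ge0 wx t0).
apply: le_trans (le_phi_inv wy (_ : _ <= (1 + c^-1) * M)) _.
  by rewrite mulrDl mul1r lerD2l.
by rewrite [psi y M * _]mulrC; apply: phi_inv_scale.
Qed.

Lemma cond_A2_small_of_A2_max : cond_A2_max mu Omega phi -> cond_A2_small mu Omega phi.
Proof.
move=> A2max sigma s0; have [beta [h [b0 b1 hL inv_le]]] := A2max sigma s0.
have [c [c0 c1 chL ch_le]] := L1Linf_nonneg_shrink mOmega (divr_gt0 s0 (ltr0Sn _ 1)) hL.
have [_ h0 _ _] := hL.
have a0 : 0 < a by apply: lt_le_trans a_ge1.
exists (beta * c / a), (fun x => c * h x); split => //.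
- by rewrite divr_gt0 ?mulr_gt0.
- rewrite ler_pdivrMr // mul1r; apply: le_trans a_ge1.
  exact: mulr_ile1 (ltW b0) (ltW c0) b1 c1.
apply: ae2S phi_ae inv_le _ => x y Ox Oy wx wy inv_le_xy _ tau H_le tau_le /=.
have tau0 : 0 <= tau by apply: le_trans H_le; rewrite addr_ge0 ?mulr_ge0 ?h0 ?ltW.
set M := Num.max tau (h x + h y).
have c_inv1 : 1 <= c^-1 by rewrite invf_ge1.
have M_le : M <= c^-1 * tau.
  rewrite ge_max ler_peMl //=.
  by rewrite -(ler_pM2l c0) mulrA mulfV ?gt_eqF // mul1r mulrDr.
have key : beta * psi x tau <= a * c^-1 * psi y tau.
  apply: le_trans (ler_wpM2l (ltW b0) (le_phi_inv wx (_ : tau <= M))) _.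
    by rewrite le_max lexx.
  apply: le_trans (inv_le_xy tau tau0 tau_le) _.
  exact: le_trans (le_phi_inv wy M_le) (phi_inv_scale wy a_ge1 tau c_inv1).
have -> : beta * c / a * psi x tau = c / a * (beta * psi x tau) by ring.
by rewrite -ler_pdivlMl ?divr_gt0 // invf_div.
Qed.

Lemma cond_A0_A2_above_of_A2_small : cond_A2_small mu Omega phi ->
  cond_A0 mu Omega phi /\ cond_A2_above mu Omega phi.
Proof.
move=> A2small; split; last first.
  by move=> sigma s0; have [beta [h [? ? ? _ ?]]] := A2small sigma s0; exists beta, h.
have [beta [h [b0 _ _ h_le inv_le]]] := A2small 2 (ltr0Sn _ 1).
have [null|[x0 [Ox0 [wx0 hx0]] ae_y]] := ae2_anchor (ae_in_and phi_ae h_le) inv_le.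
  by exists 1; split=> //; apply: filterS null => x nOx /nOx.
have a0 : 0 < a by apply: lt_le_trans a_ge1.
set p := psi x0 2; have p0 : 0 < p := phi_inv_gt0 wx0 (ltr0Sn _ 1).
exists (Num.min 1 (Num.min (beta * p / (2 * a)) (beta / p))); split.
- by rewrite !lt_min ltr01 !divr_gt0 ?mulr_gt0.
- by rewrite ge_min lexx.
apply: filterS ae_y => y good Oy; have [[wy hy] inv_x0y inv_yx0] := good Oy.
have h_sum : h x0 + h y <= 2 by move: hx0 hy; lra.
have lower : beta * p <= psi y 2 by apply: inv_x0y.
have upper : beta * psi y 2 <= p by apply: inv_yx0; rewrite // addrC.
split.
- rewrite !ge_min (_ : beta * p / (2 * a) <= psi y 1) ?orbT //.
  rewrite ler_pdivrMr ?mulr_gt0 // (le_trans lower) //.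
  by have := phi_inv_scale wy a_ge1 1 (ler1n _ 2); rewrite mulr1 mulrC [2 * a]mulrC.
- apply: le_trans (le_phi_inv wy (ler1n _ 2)) _.
  apply: (@le_trans _ _ (beta / p)^-1); first by rewrite invf_div ler_pdivlMr // mulrC.
  by rewrite lef_pV2 ?posrE ?lt_min ?ltr01 ?divr_gt0 ?mulr_gt0 // !ge_min lexx !orbT.
Qed.

Lemma cond_A2_of_A0_A2_above : cond_A0 mu Omega phi /\ cond_A2_above mu Omega phi ->
  cond_A2 mu Omega phi.
Proof.
move=> [[b0 [b0_gt0 _ A0]] A2above] sigma s0.
have [beta [h [b_gt0 b1 hL inv_le]]] := A2above (2 * sigma) (mulr_gt0 (ltr0Sn _ 1) s0).
have [_ h0 _ _] := hL.
have a0 : 0 < a by apply: lt_le_trans a_ge1.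
set lo := b0 * Num.min sigma 1 / a; set up := a * Num.max sigma 1 / b0.
have lo0 : 0 < lo by rewrite divr_gt0 // mulr_gt0 // lt_min s0 ltr01.
have up0 : 0 < up by rewrite divr_gt0 // mulr_gt0 // lt_max ltr01 orbT.
set b := Num.min beta (lo / up).
have [b_le_beta b_le_q] : b <= beta /\ b <= lo / up by rewrite !ge_min !lexx orbT.
exists b, h; split => //; first by rewrite lt_min b_gt0 divr_gt0.
  exact: le_trans b_le_beta b1.
apply: ae2S (ae_in_and phi_ae A0) inv_le _.
move=> x y Ox Oy [wx [_ psix1]] [wy [psiy1 _]] inv_le_xy _ tau tau0 tau_le.
have psix0 := phi_inv_ge0 phi x tau.
have [H_le|H_gt] := lerP (h x + h y) sigma.
  rewrite -addrA; apply: le_trans (inv_le_xy _ _ _); last 2 first.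
  - by rewrite lerDr.
  - by lra.
  rewrite (le_trans (ler_wpM2r psix0 b_le_beta)) // ler_wpM2l ?(ltW b_gt0) //.
  by apply: (le_phi_inv wx); rewrite lerDl addr_ge0 ?h0.
have s_le : sigma <= tau + h x + h y by rewrite -addrA (le_trans (ltW H_gt)) // lerDr.
apply: le_trans (phi_inv_ge_min1 wy a_ge1 s0 psiy1 s_le); rewrite -/lo.
apply: le_trans (ler_wpM2r psix0 b_le_q) _.
rewrite mulrAC ler_pdivrMr // ler_pM2l // /up.
exact (phi_inv_le_max1 wx a_ge1 psix1 tau_le).
Qed.

End equivalence.

Theorem proposition3p1 (d : measure_display) (T : measurableType d)
  (R : realType) (mu : {measure set T -> \bar R}) (Omega : set T)
  (mOmega : measurable Omega) (phi : T -> R -> \bar R) :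
  weak_Phi mu Omega phi ->
  [<-> cond_A2 mu Omega phi;
       (* (2) *)
       forall sigma : R, 0 < sigma ->
         exists beta : R, exists h : T -> R,
           [/\ 0 < beta, beta <= 1, L1Linf_nonneg mu Omega h &
             ae2 mu Omega (fun x y => forall t : R, 0 <= t ->
               (0 <= phi y t)%E -> (phi y t <= sigma%:E)%E ->
               (phi x (beta * t)%R <= phi y t + (h x + h y)%:E)%E)];
       (* (3) *)
       forall sigma : R, 0 < sigma ->
         exists beta : R, exists h : T -> R,
           [/\ 0 < beta, beta <= 1, L1Linf_nonneg mu Omega h &
             ae2 mu Omega (fun x y => forall tau : R, 0 <= tau -> tau <= sigma ->
               beta * phi_inv phi x (Num.max tau (h x + h y))
                 <= phi_inv phi y (Num.max tau (h x + h y)))];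
       (* (4) *)
       forall sigma : R, 0 < sigma ->
         exists beta : R, exists h : T -> R,
           [/\ 0 < beta, beta <= 1, L1Linf_nonneg mu Omega h,
             {ae mu, forall x, Omega x -> h x <= sigma / 2} &
             ae2 mu Omega (fun x y => forall tau : R, h x + h y <= tau -> tau <= sigma ->
               beta * phi_inv phi x tau <= phi_inv phi y tau)];
       (* (5) *)
       cond_A0 mu Omega phi /\
       forall sigma : R, 0 < sigma ->
         exists beta : R, exists h : T -> R,
           [/\ 0 < beta, beta <= 1, L1Linf_nonneg mu Omega h &
             ae2 mu Omega (fun x y => forall tau : R, h x + h y <= tau -> tau <= sigma ->
               beta * phi_inv phi x tau <= phi_inv phi y tau)]].
Proof.
move=> [_ _ [a [a_ge1 phi_ae]]]; tfae.
- exact (cond_A2_phi_of_A2 phi_ae).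
- exact (cond_A2_max_of_A2_phi mOmega a_ge1 phi_ae).
- exact (cond_A2_small_of_A2_max mOmega a_ge1 phi_ae).
- exact (cond_A0_A2_above_of_A2_small a_ge1 phi_ae).
- exact (cond_A2_of_A0_A2_above a_ge1 phi_ae).
Qed.
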